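(* Let $\mathcal{T}$ be an $l$-eligible microdata table and run the algorithm described in the context (arbitrary tie-breaking). If the algorithm does not terminate by the end of Phase Two, then the set $\ddot{R}$ of removed tuples at the end of Phase Two has at least two pillars.
   Context: A microdata table $\mathcal{T}$ is a multiset of $n$ tuples with values on $d$ quasi-identifier (QI) attributes and one sensitive attribute (SA). For a multiset $Q$ and SA value $v$, $h(Q,v)$ is the number of tuples in $Q$ with SA value $v$, $h(Q)=\max_v h(Q,v)$, pillars of $Q$ are the $v$ with $h(Q,v)=h(Q)$; $Q$ is $l$-eligible if $|Q|\ge l\cdot h(Q)$. Let $Q_1,\dots,Q_s$ be the maximal classes of tuples of $\mathcal{T}$ with identical values on all QI attributes; the algorithm only moves tuples from these groups into a set $R$ (initially empty). Phase One: for each $i$, while $Q_i$ is not $l$-eligible, move a tuple of a pillar of $Q_i$ to $R$; if then $R$ is $l$-eligible, terminate. Phase Two terminology (w.r.t. current state): a group $Q$ is thin if $|Q|=l\cdot h(Q)$ and fat if $|Q|\ge l\cdot h(Q)+1$; $Q$ is conflicting if some pillar of $Q$ is a pillar of $R$; $Q$ is dead if thin and conflicting, alive otherwise; an SA value $v$ is alive if some alive group $Q$ has $h(Q,v)>0$. Phase Two iterates: if no SA value is alive, Phase Two ends. Otherwise pick an alive SA value $v$ minimizing $h(R,v)$ and an alive group $Q$ with $h(Q,v)>0$ (ties arbitrary); if $Q$ is fat move one tuple with SA value $v$ from $Q$ to $R$; if $Q$ is thin move one tuple of each pillar of $Q$ to $R$. If $R$ is now $l$-eligible, the algorithm terminates.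 *)

From mathcomp Require Import all_boot.
Set Implicit Arguments. Unset Strict Implicit. Unset Printing Implicit Defensive.

Section Anon.
Variable V : eqType.  (* sensitive-attribute values *)

(* Multisets of SA values are represented by sequences (order irrelevant). *)
Definition h (Q : seq V) (v : V) : nat := count_mem v Q.
Definition hmax (Q : seq V) : nat := \max_(v <- Q) count_mem v Q.
Definition pillar (Q : seq V) (v : V) : bool := h Q v == hmax Q.
Definition eligible (l : nat) (Q : seq V) : bool := l * hmax Q <= size Q.
Definition thin (l : nat) (Q : seq V) : bool := size Q == l * hmax Q.
Definition fat (l : nat) (Q : seq V) : bool := (l * hmax Q).+1 <= size Q.
Definition conflicting (Q R : seq V) : Prop := exists v : V, pillar Q v && pillar R v.
Definition dead (l : nat) (Q R : seq V) : Prop := thin l Q /\ conflicting Q R.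
Definition alive_group (l : nat) (Q R : seq V) : Prop := ~ dead l Q R.
Definition alive_value (l : nat) (gs : seq (seq V)) (R : seq V) (v : V) : Prop :=
  exists2 Q, Q \in gs & alive_group l Q R /\ 0 < h Q v.

Definition pillars (Q : seq V) : seq V := [seq u <- undup Q | pillar Q u].
Definition remove_each (ps Q : seq V) : seq V := foldr (fun u acc => rem u acc) Q ps.

(* Phase One, from group index i with current groups gs and removed set R,
   ending (without termination) with groups gs' and removed set R'.
   After each move the termination test is performed; non-terminating runs
   require that R be not l-eligible after each move. *)
Inductive phase1 (l : nat) : nat -> seq (seq V) -> seq V -> seq (seq V) -> seq V -> Prop :=
| p1_done i gs R : size gs <= i -> phase1 l i gs R gs R
| p1_next i gs R gs' R' :
    i < size gs -> eligible l (nth [::] gs i) ->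
    phase1 l i.+1 gs R gs' R' -> phase1 l i gs R gs' R'
| p1_move i gs R v gs' R' :
    i < size gs -> ~~ eligible l (nth [::] gs i) ->
    v \in nth [::] gs i -> pillar (nth [::] gs i) v ->
    ~~ eligible l (v :: R) ->
    phase1 l i (set_nth [::] gs i (rem v (nth [::] gs i))) (v :: R) gs' R' ->
    phase1 l i gs R gs' R'.

(* Phase Two, from groups gs and removed set R, ending (without termination,
   i.e. no SA value alive) with removed set Rf. *)
Inductive phase2 (l : nat) : seq (seq V) -> seq V -> seq V -> Prop :=
| p2_end gs R : (forall v, ~ alive_value l gs R v) -> phase2 l gs R R
| p2_fat gs R v j Rf :
    alive_value l gs R v ->
    (forall u, alive_value l gs R u -> h R v <= h R u) ->
    j < size gs -> alive_group l (nth [::] gs j) R -> 0 < h (nth [::] gs j) v ->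
    fat l (nth [::] gs j) ->
    ~~ eligible l (v :: R) ->
    phase2 l (set_nth [::] gs j (rem v (nth [::] gs j))) (v :: R) Rf ->
    phase2 l gs R Rf
| p2_thin gs R v j Rf :
    alive_value l gs R v ->
    (forall u, alive_value l gs R u -> h R v <= h R u) ->
    j < size gs -> alive_group l (nth [::] gs j) R -> 0 < h (nth [::] gs j) v ->
    thin l (nth [::] gs j) ->
    ~~ eligible l (pillars (nth [::] gs j) ++ R) ->
    phase2 l (set_nth [::] gs j (remove_each (pillars (nth [::] gs j)) (nth [::] gs j)))
             (pillars (nth [::] gs j) ++ R) Rf ->
    phase2 l gs R Rf.

End Anon.

(* The QI-group of table T with QI value q: multiset of SA values of its tuples. *)
Definition group (Q V : eqType) (T : seq (Q * V)) (q : Q) : seq V :=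
  [seq t.2 | t <- T & t.1 == q].

From mathcomp Require Import all_boot zify.

Set Implicit Arguments.
Unset Strict Implicit.
Unset Printing Implicit Defensive.

(* Along the run, the removed multiset R together with the remaining groups is
   a rearrangement of the table, and R is empty or not l-eligible.  If R is
   still empty after Phase Two, every value is a pillar of R, and an l-eligible
   table with l >= 2 contains two distinct values.  Otherwise, if p were the
   only pillar of R, every nonempty remaining group would be dead, i.e. thin
   with pillar p, so its size is l times its number of p's.  Summing,
   size table = size R + l * h rest p < l * h R p + l * h rest p
              = l * h table p <= size table. *)

Section Multisets.
Variable V : eqType.
Implicit Types (s Q R : seq V) (v : V).

Lemma h_le_hmax s v : h s v <= hmax s.
Proof.
rewrite /h /hmax; have [vs|vNs] := boolP (v \in s).
  exact: (leq_bigmax_seq (F := fun u => count_mem u s) v vs).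
by rewrite (count_memPn vNs).
Qed.

Lemma exists_pillar s : 0 < hmax s -> exists v, pillar s v.
Proof.
have : hmax s = 0 \/ exists v, hmax s = h s v.
  apply: (big_ind (fun n => n = 0 \/ exists v, n = h s v)) => [|m n Pm Pn|v _];
    [by left | | by right; exists v].
  by case: (leqP m n).
by case=> [-> // | [v hv] _]; exists v; rewrite /pillar hv.
Qed.

Lemma pillar_mem s v : 0 < hmax s -> pillar s v -> v \in s.
Proof. by move=> s_gt0 /eqP hv; rewrite -has_pred1 has_count -/(h s v) hv. Qed.

Lemma pillar_nil v : pillar [::] v.
Proof. by rewrite /pillar /h /hmax big_nil. Qed.

Lemma eligible_not_constant l x s :
  2 <= l -> eligible l (x :: s) -> exists2 y, y \in s & y != x.
Proof.
move=> l_ge2 elig; have [/hasP // | /hasPn s_const] := boolP (has (predC1 x) s).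
have count_x : count_mem x s = size s.
  by apply/eqP; rewrite -all_count; apply/allP => y /s_const/negPn.
have := h_le_hmax (x :: s) x; move: elig.
by rewrite /eligible /h /= eqxx count_x; nia.
Qed.

Lemma remove_each_perm ps Q : uniq ps -> {subset ps <= Q} ->
  perm_eq Q (ps ++ remove_each ps Q).
Proof.
elim: ps => [|u ps IH] //= /andP[uNps ps_uniq] psQ.
have IH' := IH ps_uniq (fun y yps => psQ y (mem_behead (s := u :: ps) yps)).
have u_rest : u \in remove_each ps Q.
  have : u \in ps ++ remove_each ps Q by rewrite -(perm_mem IH') psQ ?mem_head.
  by rewrite mem_cat (negbTE uNps).
apply: perm_trans IH' _; rewrite /remove_each /= -/(remove_each ps Q).
by rewrite perm_sym -cat1s perm_catCA perm_cat2l perm_sym cat1s perm_to_rem.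
Qed.

Lemma pillars_perm Q : perm_eq Q (pillars Q ++ remove_each (pillars Q) Q).
Proof.
apply: remove_each_perm; first by rewrite filter_uniq ?undup_uniq.
by move=> y; rewrite mem_filter mem_undup => /andP[].
Qed.

Lemma perm_flatten_set_nth (gs : seq (seq V)) j x : j < size gs ->
  perm_eq (nth [::] gs j ++ flatten (set_nth [::] gs j x)) (x ++ flatten gs).
Proof.
elim: gs j => [|Q gs IH] [|j] //= j_lt; first by rewrite perm_catCA.
by rewrite perm_catCA perm_sym perm_catCA perm_sym perm_cat2l IH.
Qed.

Lemma size_flatten_uniform l p (gs : seq (seq V)) :
  (forall Q, Q \in gs -> size Q = l * h Q p) ->
  size (flatten gs) = l * h (flatten gs) p.
Proof.
elim: gs => [|Q gs IH] gsP /=; first by rewrite /h muln0.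
rewrite size_cat /h count_cat mulnDr -!/(h _ p) gsP ?mem_head // IH // => Q' Q'gs.
by rewrite gsP // inE Q'gs orbT.
Qed.

End Multisets.

Lemma perm_flatten_groups (Q V : eqType) (T : seq (Q * V)) (qs : seq Q) :
  uniq qs ->
  perm_eq (flatten [seq group T q | q <- qs]) [seq t.2 | t <- T & t.1 \in qs].
Proof.
elim: qs => [|q qs IH] /=; first by rewrite (eq_filter (a2 := pred0)) ?filter_pred0.
case/andP=> qNqs qs_uniq; apply: perm_trans (perm_cat (perm_refl _) (IH qs_uniq)) _.
rewrite /group -map_cat; apply/perm_map/permP => a; rewrite count_cat !count_filter.
rewrite -count_predUI (@eq_count _ (predI (predI a _) _) pred0) ?count_pred0 ?addn0.
  by apply: eq_count => t; rewrite /= inE andb_orr.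
by move=> t /=; case: eqP => [-> |]; rewrite ?(negbTE qNqs) !andbF.
Qed.

Section Phases.
Variables (V : eqType) (l : nat) (table : seq V).
Implicit Types (gs : seq (seq V)) (R : seq V).

Definition removal_invariant gs R : Prop :=
  perm_eq (R ++ flatten gs) table /\ (R = [::] \/ ~~ eligible l R).

Lemma removal_invariant_move gs R j ps x :
  j < size gs -> perm_eq (nth [::] gs j) (ps ++ x) -> ~~ eligible l (ps ++ R) ->
  removal_invariant gs R -> removal_invariant (set_nth [::] gs j x) (ps ++ R).
Proof.
move=> j_lt gj_perm R_notelig [part _]; split; last by right.
apply: perm_trans part; rewrite -catA perm_catCA perm_cat2l -(perm_cat2l x).
apply: perm_trans (perm_flatten_set_nth x j_lt).
by rewrite perm_catCA catA perm_cat2r perm_sym.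
Qed.

Lemma phase1_invariant i gs R gs' R' :
  phase1 l i gs R gs' R' -> removal_invariant gs R -> removal_invariant gs' R'.
Proof.
elim=> // {}i {}gs {}R v {}gs' {}R' i_lt _ v_in _ R_notelig _ IH inv.
by apply/IH/(removal_invariant_move (ps := [:: v])) => //; apply: perm_to_rem.
Qed.

Lemma phase2_invariant gs R Rf :
  phase2 l gs R Rf -> removal_invariant gs R ->
  exists2 gsf, removal_invariant gsf Rf & forall v, ~ alive_value l gsf Rf v.
Proof.
elim=> [{}gs {}R none_alive inv | {}gs {}R v j {}Rf _ _ j_lt _ hv _ R_notelig _ IH inv
       | {}gs {}R v j {}Rf _ _ j_lt _ _ _ R_notelig _ IH inv].
- by exists gs.
- apply/IH/(removal_invariant_move (ps := [:: v])) => //.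
  by apply/perm_to_rem; rewrite -has_pred1 has_count.
- exact/IH/removal_invariant_move/inv/R_notelig/pillars_perm.
Qed.

Lemma dead_group_size gs R p :
  (forall v, ~ alive_value l gs R v) -> (forall v, pillar R v -> v = p) ->
  forall Q, Q \in gs -> size Q = l * h Q p.
Proof.
move=> none_alive pillarR_p [|u Q'] Qgs; first by rewrite /h muln0.
apply/eqP/negPn/negP => size_neq; apply: (none_alive u); exists (u :: Q') => //.
split; last by rewrite /h /= eqxx.
case=> /eqP thin_Q [w /andP[/eqP pQw /pillarR_p w_p]].
by move: size_neq; rewrite thin_Q -pQw w_p eqxx.
Qed.

Lemma two_pillars_at_end gs R :
  2 <= l -> 0 < size table -> eligible l table ->
  removal_invariant gs R -> (forall v, ~ alive_value l gs R v) ->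
  exists v1 v2 : V, [/\ v1 != v2, pillar R v1 & pillar R v2].
Proof.
move=> l_ge2 table_gt0 table_elig [part [-> | R_notelig]] none_alive.
  case: table table_gt0 table_elig => // x s _ /(eligible_not_constant l_ge2) [y _ y_neq].
  by exists y, x; rewrite y_neq !pillar_nil.
have R_gt0 : 0 < hmax R by move: R_notelig; rewrite /eligible; lia.
have [p pR] := exists_pillar R_gt0.
have [/hasP [q _ /andP [q_neq pRq]] | /hasPn only_p] :=
  boolP (has (fun v => (v != p) && pillar R v) R).
  by exists q, p.
have pillarR_p v : pillar R v -> v = p.
  move=> pRv; apply/eqP/negPn/negP => v_neq.
  by have := only_p v (pillar_mem R_gt0 pRv); rewrite v_neq pRv.
have size_gs := size_flatten_uniform (dead_group_size none_alive pillarR_p).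
have size_table := perm_size part; have count_table := permP part (pred1 p).
have := h_le_hmax table p; move: table_elig R_notelig pR.
rewrite /eligible /pillar /h -size_table -count_table size_cat count_cat size_gs /h.
by move=> elig Rne /eqP pR; rewrite -pR in Rne; nia.
Qed.

End Phases.

Theorem corollary4 (Q V : eqType) (l : nat) (T : seq (Q * V)) (qs : seq Q)
    (gs1 : seq (seq V)) (R1 Rf : seq V) :
  2 <= l -> 0 < size T ->
  eligible l [seq t.2 | t <- T] ->
  uniq qs -> (forall q, (q \in qs) = (q \in [seq t.1 | t <- T])) ->
  phase1 l 0 [seq group T q | q <- qs] [::] gs1 R1 ->
  phase2 l gs1 R1 Rf ->
  exists v1 v2 : V, [/\ v1 != v2, pillar Rf v1 & pillar Rf v2].
Proof.
move=> l_ge2 T_gt0 T_elig qs_uniq qs_keys run1 run2.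
have init : removal_invariant l [seq t.2 | t <- T] [seq group T q | q <- qs] [::].
  split; last by left.
  rewrite cat0s; apply: perm_trans (perm_flatten_groups T qs_uniq) _.
  by rewrite (@eq_in_filter _ _ predT) ?filter_predT // => t tT; rewrite /= qs_keys map_f.
have [gsf inv_f none_alive] := phase2_invariant run2 (phase1_invariant run1 init).
by apply: two_pillars_at_end inv_f none_alive; rewrite ?size_map.
Qed.
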